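(* Let $m\ge1$ and let $T$ be a finite tree with labels in an alphabet $\Gamma\supseteq\{a_1,\dots,a_m,\varepsilon\}$, in which every node has at most $m+1$ children and every leaf and every node with at least $2$ children is labelled $\varepsilon$. Let $N\ge1$. If for each $a\in\{a_1,\dots,a_m\}$ the tree $T$ contains at least $N$ nodes labelled $a$, then for each $a\in\{a_1,\dots,a_m\}$ we have $\mathrm{score}_a(T)\ge\log_{m+1}N$.
   Context: For a letter $a$, $\mathrm{score}_a(T)$ is defined recursively: if $T$ is a single leaf, $\mathrm{score}_a(T)=0$; if the root of $T$ has label $\gamma$ and exactly one child subtree $T_1$, then $\mathrm{score}_a(T)=\mathrm{score}_a(T_1)+\iota_a(\gamma)$ where $\iota_a(\gamma)=1$ if $\gamma=a$ and $0$ otherwise; if the root (labelled $\varepsilon$) has child subtrees $T_1,\dots,T_k$ with $k\ge2$, then $\mathrm{score}_a(T)=\max_{1\le i\le k}\big(\mathrm{score}_a(T_i)+\iota\big(\sum_{j\ne i}\mathrm{score}_a(T_j)\big)\big)$, where for a natural number $x$, $\iota(x)=0$ if $x=0$ and $\iota(x)=1$ if $x>0$. *)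

From mathcomp Require Import all_boot.
Set Implicit Arguments. Unset Strict Implicit. Unset Printing Implicit Defensive.

Inductive ltree (Gamma : Type) : Type :=
  | Node : Gamma -> seq (ltree Gamma) -> ltree Gamma.
Arguments Node {Gamma} _ _.

Section Trees.
Variable Gamma : eqType.

Definition iota0 (x : nat) : nat := (0 < x)%N.

Fixpoint score (a : Gamma) (t : ltree Gamma) {struct t} : nat :=
  match t with
  | Node g ts =>
      match ts with
      | [::] => 0
      | [:: t1] => score a t1 + (g == a)
      | _ =>
        let ss := map (score a) ts in
        \max_(i < size ss)
           (nth 0 ss i + iota0 (\sum_(j < size ss | j != i) nth 0 ss j))
      end
  end.

Fixpoint count_label (a : Gamma) (t : ltree Gamma) {struct t} : nat :=
  match t with
  | Node g ts => (g == a) + sumn (map (count_label a) ts)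
  end.

Fixpoint wf_tree (m : nat) (eps : Gamma) (t : ltree Gamma) {struct t} : bool :=
  match t with
  | Node g ts =>
      [&& size ts <= m.+1,
          ((size ts == 0) || (2 <= size ts)) ==> (g == eps)
        & all (wf_tree m eps) ts]
  end.
End Trees.

(* Weigh a score [s] by [(m+1)^s - 1].  A tree has at most [weight (score_a T)]
   nodes labelled [a], by induction (only [a != eps] is used).  At a unary node
   the count grows by at most one exactly when the score does, and
   [(m+1)^(s+1) - 1 >= ((m+1)^s - 1) + 1].  A branching node is labelled [eps];
   let [s0] be the largest score of its children.  If the other children all
   score [0], the node scores [s0] and the weights of the children add up to at
   most [weight s0] by superadditivity.  Otherwise the node scores [s0 + 1], and
   its at most [m+1] children weigh at most [(m+1) ((m+1)^s0 - 1)], which is at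
   most [(m+1)^(s0+1) - 1].  Taking logarithms in [N < (m+1)^(score_a T)] ends
   the proof. *)
From mathcomp Require Import all_boot zify.
From Stdlib Require Import Reals Lra.
(* Reals rebinds [_ ^ _] in nat_scope to [Nat.pow]; restore [expn]. *)
Import ssrnat.

Set Implicit Arguments.
Unset Strict Implicit.
Unset Printing Implicit Defensive.

Local Open Scope nat_scope.

Section Weight.

Variable B : nat.

Definition weight (s : nat) : nat := B ^ s - 1.

Lemma weight0 : weight 0 = 0.
Proof. by rewrite /weight expn0. Qed.

Lemma weightS s : 0 < B -> weight s.+1 = B * weight s + B.-1.
Proof.
move=> B_gt0; rewrite /weight expnS.
have : 0 < B ^ s by rewrite expn_gt0 B_gt0.
move: (B ^ s) => X; nia.
Qed.

Lemma leq_weight s t : 0 < B -> s <= t -> weight s <= weight t.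
Proof. by move=> B_gt0 le_st; rewrite leq_sub2r // leq_pexp2l. Qed.

Lemma weightD s t : 0 < B -> weight s + weight t <= weight (s + t).
Proof.
move=> B_gt0; rewrite /weight expnD.
have : 0 < B ^ s by rewrite expn_gt0 B_gt0.
have : 0 < B ^ t by rewrite expn_gt0 B_gt0.
move: (B ^ s) (B ^ t) => X Y; nia.
Qed.

Lemma sum_weight_le_weight_sum (I : Type) (r : seq I) (P : pred I) (F : I -> nat) :
  0 < B -> \sum_(i <- r | P i) weight (F i) <= weight (\sum_(i <- r | P i) F i).
Proof.
move=> B_gt0; apply: (big_ind2 (fun x y => x <= weight y)); rewrite ?weight0 //.
by move=> x1 y1 x2 y2 le1 le2; apply: leq_trans (weightD _ _ B_gt0); apply: leq_add.
Qed.

End Weight.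

Definition branch_score (ss : seq nat) : nat :=
  \max_(i < size ss) (nth 0 ss i + iota0 (\sum_(j < size ss | j != i) nth 0 ss j)).

Lemma sumn_weight_le_branch_score (B : nat) (ss : seq nat) :
  1 < B -> size ss <= B -> sumn (map (weight B) ss) <= weight B (branch_score ss).
Proof.
move=> B_gt1 size_ss; have B_gt0 : 0 < B by lia.
rewrite /branch_score sumnE big_map (big_nth 0) big_mkord.
move: (size ss) size_ss (nth 0 ss) => [|k] le_kB F; first by rewrite big_ord0.
have [|i0 max_i0] := eq_bigmax (fun j : 'I_k.+1 => F j); first by rewrite card_ord.
have le_F_i0 (j : 'I_k.+1) : F j <= F i0 by rewrite -max_i0 (leq_bigmax j).
set rest := \sum_(j < k.+1 | j != i0) F j.
have le_score : F i0 + iota0 rest <=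
    \max_(i < k.+1) (F i + iota0 (\sum_(j < k.+1 | j != i) F j)).
  exact: (leq_bigmax i0).
apply: leq_trans (leq_weight B_gt0 le_score); rewrite /iota0.
have [rest_gt0 | rest_eq0] := ltnP 0 rest.
- have le_card : \sum_(j < k.+1) weight B (F j) <= k.+1 * weight B (F i0).
    apply: (@leq_trans (\sum_(j < k.+1) weight B (F i0))).
      by apply: leq_sum => j _; exact: leq_weight B_gt0 (le_F_i0 j).
    by rewrite sum_nat_const card_ord.
  rewrite addn1 weightS //; apply: (leq_trans le_card); apply: leq_trans (leq_addr _ _).
  by rewrite leq_mul2r le_kB orbT.
- apply: leq_trans (sum_weight_le_weight_sum _ _ _ B_gt0) _.
  by apply: leq_weight => //; rewrite (bigD1 i0) //= -/rest; lia.
Qed.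

Fixpoint ltree_ind_Forall (Gamma : Type) (P : ltree Gamma -> Prop)
  (IH : forall g ts, List.Forall P ts -> P (Node g ts)) (t : ltree Gamma) : P t :=
  match t with
  | Node g ts =>
      IH g ts ((fix go (l : seq (ltree Gamma)) : List.Forall P l :=
        match l with
        | [::] => List.Forall_nil P
        | t :: l' => List.Forall_cons t (ltree_ind_Forall IH t) (go l')
        end) ts)
  end.

Lemma count_label_le_weight_score (Gamma : eqType) (m : nat) (eps a : Gamma)
  (t : ltree Gamma) :
  0 < m -> a != eps -> wf_tree m eps t ->
  count_label a t <= weight m.+1 (score a t).
Proof.
move=> m_gt0 a_neq_eps; elim/ltree_ind_Forall: t => g ts IH /= /and3P [size_ts eps_g wf_ts].
have le_children : sumn (map (count_label a) ts) <= sumn (map (weight m.+1) (map (score a) ts)).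
  elim: ts IH wf_ts {size_ts eps_g} => //= t ts IHts /List.Forall_cons_iff [IHt IH].
  by case/andP=> wf_t wf_ts; apply: leq_add; [apply: IHt | apply: IHts].
have g_neq_a : (g == eps) -> (g == a) = false.
  by move/eqP->; apply/negbTE; rewrite eq_sym.
case: ts IH size_ts eps_g wf_ts le_children => [|t1 [|t2 ts]] _ size_ts eps_g _.
- by rewrite g_neq_a ?(implyP eps_g).
- rewrite /= !addn0 => le_child; case: (g == a); last by rewrite addn0.
  by rewrite add1n addn1 weightS //; nia.
- rewrite g_neq_a ?(implyP eps_g) // add0n => le_children.
  apply: (leq_trans le_children); apply: sumn_weight_le_branch_score => //.
  by rewrite size_map.
Qed.

Lemma INR_expn (B s : nat) : INR (B ^ s) = (INR B ^ s)%R.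
Proof. by elim: s => [|s IH]; rewrite ?expn0 // expnS mulnE mult_INR IH. Qed.

Lemma ln_div_ln_le_of_leq_expn (B N s : nat) :
  1 < B -> 0 < N -> N <= B ^ s -> (ln (INR N) / ln (INR B) <= INR s)%R.
Proof.
move=> B_gt1 N_gt0 le_N_pow.
have B_gtR1 : (1 < INR B)%R by apply: (lt_INR 1); apply/ltP.
have lnB_gt0 : (0 < ln (INR B))%R by rewrite -ln_1; apply: ln_increasing; lra.
have N_gtR0 : (0 < INR N)%R by apply: (lt_INR 0); apply/ltP.
have le_lnN : (ln (INR N) <= INR s * ln (INR B))%R.
  rewrite -ln_pow; last lra.
  have /Rle_lt_or_eq_dec [lt_pow | <-] : (INR N <= INR B ^ s)%R.
    by rewrite -INR_expn; apply: le_INR; apply/leP.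
  + exact: Rlt_le (ln_increasing _ _ N_gtR0 lt_pow).
  + exact: Rle_refl.
apply: (Rmult_le_reg_r (ln (INR B))) => //.
by rewrite /Rdiv Rmult_assoc Rinv_l; lra.
Qed.

Theorem mainTheorem7 (Gamma : eqType) (m : nat) (hm : (1 <= m)%N)
  (eps : Gamma) (a : 'I_m -> Gamma) (a_inj : injective a)
  (a_neq_eps : forall i, a i != eps)
  (T : ltree Gamma) (hT : wf_tree m eps T)
  (N : nat) (hN : (1 <= N)%N)
  (hcount : forall i : 'I_m, (N <= count_label (a i) T)%N) :
  forall i : 'I_m,
    (ln (INR N) / ln (INR (m + 1)) <= INR (score (a i) T))%R.
Proof.
move=> i; rewrite addn1; apply: ln_div_ln_le_of_leq_expn => //.
have le_N_weight := leq_trans (hcount i) (count_label_le_weight_score hm (a_neq_eps i) hT).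
by apply: leq_trans le_N_weight _; apply: leq_subr.
Qed.
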